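(* For every SaSTL formula $\varphi$ (as defined in the context), every spatio-temporal signal $\omega$, every time $t\in\mathbb{T}$ and every location $l\in L$: \[ \rho(\varphi,\omega,t,l)>0 \;\Longrightarrow\; (\omega,t,l)\models\varphi, \qquad \rho(\varphi,\omega,t,l)<0 \;\Longrightarrow\; (\omega,t,l)\not\models\varphi . \]
   Context: Time domain $\mathbb{T}=\mathbb{R}_{\ge 0}$. $L$ is a finite nonempty set of locations. $G=(L,E,\eta)$ is a weighted undirected graph with edge weights $\eta:E\to\mathbb{R}_{\ge0}$; the distance $d(l,l')$ is the minimum, over all paths $\sigma$ between $l$ and $l'$, of $\sum_{e\in\sigma}\eta(e)$ (and $+\infty$ if there is no path). $X=\{x_1,\dots,x_n\}$ is a set of signal variables. A spatio-temporal signal is a function $\omega:\mathbb{T}\times L\to\mathbb{R}^n$; $\pi_{x}(\omega)[t,l]\in\mathbb{R}$ denotes its component for variable $x\in X$ at time $t$ and location $l$. $P$ is a finite set of propositions and $\mathcal{L}:L\to 2^P$ a labeling. Location formulas are $\psi::=\top\mid p\mid\neg\psi\mid\psi\vee\psi$ ($p\in P$), with $\mathcal{L}(l)\models\psi$ defined in the usual propositional way. A spatial domain is $\mathcal{D}=([d_1,d_2],\psi)$ with $0\le d_1\le d_2\le+\infty$. For $l\in L$ let $L^l_{\mathcal{D}}=\{l'\in L: d_1\le d(l,l')\le d_2,\ \mathcal{L}(l')\models\psi\}$. Standing assumption: for every spatial domain $\mathcal{D}$ occurring in the formula and every $l\in L$, $L^l_{\mathcal{D}}\neq\emptyset$. Let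 $\alpha^x_{\mathcal{D}}(\omega,t,l)$ be the (nonempty, finite) multiset $\{\pi_x(\omega)[t,l'] : l'\in L^l_{\mathcal{D}}\}$, and for $\mathrm{op}\in\{\max,\min,\mathrm{sum},\mathrm{avg}\}$ let $\mathrm{op}(\cdot)$ be its maximum, minimum, sum, or arithmetic mean. SaSTL syntax: $\varphi::= x>c \mid \neg\varphi\mid \varphi_1\wedge\varphi_2\mid\varphi_1\vee\varphi_2\mid \varphi_1\,\mathcal{U}_I\,\varphi_2\mid \mathcal{A}^{\mathrm{op}}_{\mathcal{D}}x>c\mid \mathcal{C}^{\mathrm{op}}_{\mathcal{D}}\varphi>c$, where $x\in X$, $c\in\mathbb{R}$, $I\subseteq\mathbb{R}_{>0}$ is a nonempty interval, $\mathrm{op}\in\{\max,\min,\mathrm{sum},\mathrm{avg}\}$. For counting formulas $\mathcal{C}^{\mathrm{op}}_{\mathcal{D}}\varphi>c$ it is assumed that $0\le c<1$ if $\mathrm{op}\in\{\max,\min,\mathrm{avg}\}$ and $0\le c<|L^l_{\mathcal{D}}|$ for all $l\in L$ if $\mathrm{op}=\mathrm{sum}$. Boolean semantics: $(\omega,t,l)\models x>c$ iff $\pi_x(\omega)[t,l]>c$; $\neg,\wedge,\vee$ as usual; $(\omega,t,l)\models\varphi_1\mathcal{U}_I\varphi_2$ iff there is $t'\in(t+I)\cap\mathbb{T}$ with $(\omega,t',l)\models\varphi_2$ and $(\omega,t'',l)\models\varphi_1$ for all $t''\in(t,t')$ (open interval); $(\omega,t,l)\models\mathcal{A}^{\mathrm{op}}_{\mathcal{D}}x>c$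 iff $\mathrm{op}(\alpha^x_{\mathcal{D}}(\omega,t,l))>c$; $(\omega,t,l)\models\mathcal{C}^{\mathrm{op}}_{\mathcal{D}}\varphi>c$ iff $\mathrm{op}(\{g(l'):l'\in L^l_{\mathcal{D}}\})>c$ (multiset), where $g(l')=1$ if $(\omega,t,l')\models\varphi$ and $g(l')=0$ otherwise. Quantitative semantics (robustness, values in $\mathbb{R}\cup\{\pm\infty\}$, with $\inf\emptyset=+\infty$): $\rho(x>c,\omega,t,l)=\pi_x(\omega)[t,l]-c$; $\rho(\neg\varphi)=-\rho(\varphi)$; $\rho(\varphi_1\wedge\varphi_2)=\min\{\rho(\varphi_1),\rho(\varphi_2)\}$; $\rho(\varphi_1\vee\varphi_2)=\max\{\rho(\varphi_1),\rho(\varphi_2)\}$ (all at the same $\omega,t,l$); $\rho(\varphi_1\mathcal{U}_I\varphi_2,\omega,t,l)=\sup_{t'\in(t+I)\cap\mathbb{T}}\min\{\rho(\varphi_2,\omega,t',l),\ \inf_{t''\in(t,t')}\rho(\varphi_1,\omega,t'',l)\}$; $\rho(\mathcal{A}^{\mathrm{sum}}_{\mathcal{D}}x>c,\omega,t,l)=\big(\mathrm{sum}(\alpha^x_{\mathcal{D}}(\omega,t,l))-c\big)/|\alpha^x_{\mathcal{D}}(\omega,t,l)|$ and $\rho(\mathcal{A}^{\mathrm{op}}_{\mathcal{D}}x>c,\omega,t,l)=\mathrm{op}(\alpha^x_{\mathcal{D}}(\omega,t,l))-c$ for $\mathrm{op}\in\{\max,\min,\mathrm{avg}\}$. For counting,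 let $R=\{\rho(\varphi,\omega,t,l'):l'\in L^l_{\mathcal{D}}\}$ (multiset) and let $\delta(k,R)$ denote the $k$-th largest element of $R$ counted with multiplicity; then $\rho(\mathcal{C}^{\max}_{\mathcal{D}}\varphi>c)=\max R$, $\rho(\mathcal{C}^{\min}_{\mathcal{D}}\varphi>c)=\min R$, $\rho(\mathcal{C}^{\mathrm{sum}}_{\mathcal{D}}\varphi>c)=\delta(\lfloor c\rfloor+1,R)$, $\rho(\mathcal{C}^{\mathrm{avg}}_{\mathcal{D}}\varphi>c)=\delta(\lfloor c\,|L^l_{\mathcal{D}}|\rfloor+1,R)$. *)

From HB Require Import structures.
From mathcomp Require Import all_boot all_order all_algebra.
From mathcomp Require Import all_classical all_reals.
From mathcomp Require Import ereal.
Set Implicit Arguments. Unset Strict Implicit. Unset Printing Implicit Defensive.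
Import Order.TTheory GRing.Theory Num.Theory.
Local Open Scope ring_scope.
Local Open Scope classical_set_scope.

Inductive aop := OpMax | OpMin | OpSum | OpAvg.

Inductive lform (P : Type) :=
| LTop
| LProp of P
| LNeg of lform P
| LOr of lform P & lform P.

Fixpoint lsat (P : Type) (lbl : P -> bool) (psi : lform P) : bool :=
  match psi with
  | LTop => true
  | LProp p => lbl p
  | LNeg q => ~~ lsat lbl q
  | LOr q1 q2 => lsat lbl q1 || lsat lbl q2
  end.

(* Spatial domain D = ([d1, d2], psi), with d1, d2 in [0, +oo] *)
Record sdomain (R : realType) (P : Type) := SDom {
  sd_d1 : \bar R; sd_d2 : \bar R; sd_psi : lform P }.

Inductive sform (R : realType) (P : Type) (n : nat) :=
| FGt of 'I_n & R
| FNot of sform R P n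
| FAnd of sform R P n & sform R P n
| FOr of sform R P n & sform R P n
| FUntil of interval R & sform R P n & sform R P n
| FAgg of aop & sdomain R P & 'I_n & R               (* A^op_D x > c *)
| FCount of aop & sdomain R P & sform R P n & R.      (* C^op_D phi > c *)

Definition seqmax d (T : orderType d) (x0 : T) (s : seq T) : T :=
  \big[Order.max/head x0 s]_(x <- s) x.
Definition seqmin d (T : orderType d) (x0 : T) (s : seq T) : T :=
  \big[Order.min/head x0 s]_(x <- s) x.

Definition aggr (R : realType) (op : aop) (s : seq R) : R :=
  match op with
  | OpMax => seqmax 0 s
  | OpMin => seqmin 0 s
  | OpSum => \sum_(x <- s) x
  | OpAvg => (\sum_(x <- s) x) / (size s)%:R
  end.

(* delta(k, s): k-th largest element (k >= 1) counted with multiplicity *)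
Definition kth_largest (R : realType) (k : nat) (s : seq (\bar R)) : \bar R :=
  nth -oo%E (sort (fun a b : \bar R => (b <= a)%E) s) k.-1.

Section Semantics.
Variables (R : realType) (L : finType) (E : rel L) (eta : L -> L -> R).
Variables (P : Type) (lab : L -> P -> bool) (n : nat).
(* spatio-temporal signal: omega t l x = pi_x(omega)[t,l] *)
Variable omega : R -> L -> 'I_n -> R.

(* weight of the path l = a_0, a_1, ..., a_k (given as a :: p) *)
Fixpoint path_weight (a : L) (p : seq L) : R :=
  match p with
  | [::] => 0
  | b :: q => eta a b + path_weight b q
  end.

(* graph distance: min (= inf, attained) of path weights; +oo if no path *)
Definition dist (l l' : L) : \bar R :=
  ereal_inf [set (path_weight l p)%:E | p in [set p | path E l p /\ last l p = l']].

(* L^l_D as a duplicate-free sequence of locations *)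
Definition locs (D : sdomain R P) (l : L) : seq L :=
  [seq l' <- enum L | [&& (sd_d1 D <= dist l l')%E, (dist l l' <= sd_d2 D)%E
                        & lsat (lab l') (sd_psi D)]].

Definition alpha (D : sdomain R P) (x : 'I_n) (t : R) (l : L) : seq R :=
  [seq omega t l' x | l' <- locs D l].

Definition tshift (J : interval R) (t : R) : set R :=
  [set t' | t' - t \in J /\ 0 <= t'].

Fixpoint sat (phi : sform R P n) (t : R) (l : L) {struct phi} : Prop :=
  match phi with
  | FGt x c => c < omega t l x
  | FNot f => ~ sat f t l
  | FAnd f g => sat f t l /\ sat g t l
  | FOr f g => sat f t l \/ sat g t l
  | FUntil J f g => exists2 t', tshift J t t' &
       (sat g t' l /\ forall t'', t < t'' < t' -> sat f t'' l)
  | FAgg op D x c => c < aggr op (alpha D x t l)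
  | FCount op D f c =>
       c < aggr op [seq (if `[< sat f t l' >] then 1 else 0) | l' <- locs D l]
  end.

Fixpoint rob (phi : sform R P n) (t : R) (l : L) {struct phi} : \bar R :=
  match phi with
  | FGt x c => (omega t l x - c)%:E
  | FNot f => (- rob f t l)%E
  | FAnd f g => Order.min (rob f t l) (rob g t l)
  | FOr f g => Order.max (rob f t l) (rob g t l)
  | FUntil J f g =>
      ereal_sup [set Order.min (rob g t' l)
                   (ereal_inf [set rob f t'' l | t'' in [set t'' | t < t'' < t']])
                | t' in tshift J t]
  | FAgg OpSum D x c =>
      ((\sum_(v <- alpha D x t l) v - c) / (size (alpha D x t l))%:R)%:E
  | FAgg op D x c => (aggr op (alpha D x t l) - c)%:E
  | FCount op D f c =>
      let Rs := [seq rob f t l' | l' <- locs D l] in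
      match op with
      | OpMax => seqmax -oo%E Rs
      | OpMin => seqmin +oo%E Rs
      | OpSum => kth_largest (Num.truncn c).+1 Rs
      | OpAvg => kth_largest (Num.truncn (c * (size (locs D l))%:R)).+1 Rs
      end
  end.

Definition dom_ok (D : sdomain R P) : Prop :=
  (0 <= sd_d1 D)%E /\ (sd_d1 D <= sd_d2 D)%E /\ forall l, locs D l != [::].

Fixpoint wf (phi : sform R P n) : Prop :=
  match phi with
  | FGt _ _ => True
  | FNot f => wf f
  | FAnd f g | FOr f g => wf f /\ wf g
  | FUntil J f g => (exists x, x \in J) /\ (forall x, x \in J -> 0 < x) /\ wf f /\ wf g
  | FAgg _ D _ _ => dom_ok D
  | FCount op D f c => dom_ok D /\ wf f /\
      match op with
      | OpSum => 0 <= c /\ forall l, c < (size (locs D l))%:R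
      | _ => 0 <= c < 1
      end
  end.

End Semantics.

From HB Require Import structures.
From mathcomp Require Import all_boot all_order all_algebra.
From mathcomp Require Import all_classical all_reals.
From mathcomp Require Import ereal.
Set Implicit Arguments. Unset Strict Implicit. Unset Printing Implicit Defensive.
Import Order.TTheory GRing.Theory Num.Theory.
Local Open Scope ring_scope.

(* We say that a robustness value r is sound for a proposition s when
   r > 0 forces s and s forces r >= 0 ('sound_at').  Soundness is stable
   under every robustness constructor:
   - negation, min and max turn sound pairs into sound pairs for the
     negation, conjunction and disjunction (so Until, a sup of mins of infs,
     is handled by the sup/inf versions of these facts);
   - atomic and aggregation formulas are sound because their robustness is
     (a positive multiple of) x - c, whose sign decides c < x;
   - for counting formulas, the max / min / k-th largest of the pointwise
     robustnesses is sound for the corresponding statement about the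
     0/1 satisfaction indicators; this uses the standing assumptions
     (nonempty L^l_D, bounds on c), and the k-th largest case rests on two
     counting facts about sorted sequences.
   A structural induction then shows rob phi is sound for sat phi, and the
   theorem is a direct reformulation. *)

Section SoundPairs.
Variable R : realType.
Local Open Scope ereal_scope.

Definition sound_at (r : \bar R) (s : Prop) : Prop := (0 < r -> s) /\ (s -> 0 <= r).

Lemma sound_at_neg r s : sound_at r s -> sound_at (- r) (~ s).
Proof.
move=> [pos nneg]; rewrite /sound_at oppe_gt0 oppe_ge0; split.
  by move=> r_lt0 /nneg; rewrite leNgt r_lt0.
by move=> ns; rewrite leNgt; apply/negP => /pos.
Qed.

Lemma sound_at_min r1 r2 s1 s2 :
  sound_at r1 s1 -> sound_at r2 s2 -> sound_at (Order.min r1 r2) (s1 /\ s2).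
Proof.
move=> [p1 n1] [p2 n2]; split; first by rewrite lt_min => /andP[/p1 ? /p2 ?].
by move=> [/n1 ? /n2 ?]; rewrite le_min; apply/andP.
Qed.

Lemma sound_at_max r1 r2 s1 s2 :
  sound_at r1 s1 -> sound_at r2 s2 -> sound_at (Order.max r1 r2) (s1 \/ s2).
Proof.
move=> [p1 n1] [p2 n2]; split; first by rewrite lt_max => /orP[/p1|/p2]; tauto.
by move=> [/n1|/n2] ?; rewrite le_max; apply/orP; tauto.
Qed.

Lemma sound_at_sup T (A : set T) (r : T -> \bar R) (s : T -> Prop) :
  (forall x, sound_at (r x) (s x)) ->
  sound_at (ereal_sup [set r x | x in A]) (exists2 x, A x & s x).
Proof.
move=> snd; split.
  by move=> /ereal_sup_gtP[_ [x Ax <-] /(proj1 (snd x))]; exists x.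
move=> [x Ax /(proj2 (snd x)) rx_ge0]; apply: le_trans rx_ge0 _.
by apply: ereal_sup_ubound; exists x.
Qed.

Lemma sound_at_inf T (A : set T) (r : T -> \bar R) (s : T -> Prop) :
  (forall x, sound_at (r x) (s x)) ->
  sound_at (ereal_inf [set r x | x in A]) (forall x, A x -> s x).
Proof.
move=> snd; split.
  move=> inf_gt0 x Ax; apply: (proj1 (snd x)); apply: lt_le_trans inf_gt0 _.
  by apply: ereal_inf_lbound; exists x.
by move=> all_s; apply/ereal_infP => _ [x Ax <-]; exact: (proj2 (snd x)) (all_s x Ax).
Qed.

Lemma sound_at_diff (x c : R) : sound_at (x - c)%:E (c < x)%R.
Proof. by rewrite /sound_at lte_fin lee_fin subr_gt0 subr_ge0; split=> // /ltW. Qed.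

(* The normalised robustness of A^sum_D x > c; k = 0 gives robustness 0. *)
Lemma sound_at_scaled_diff (x c : R) (k : nat) :
  sound_at ((x - c) / k%:R)%:E (c < x)%R.
Proof.
have [->|k_gt0] := posnP k; first by rewrite invr0 mulr0; split=> //; rewrite ltxx.
have kR_gt0 : (0 < k%:R :> R)%R by rewrite ltr0n.
rewrite /sound_at lte_fin lee_fin pmulr_lgt0 ?invr_gt0 // pmulr_lge0 ?invr_gt0 //.
exact: sound_at_diff.
Qed.

Lemma sound_at_asbool r (s : Prop) : sound_at r s -> sound_at r `[< s >].
Proof. by move=> [pos nneg]; split=> [/pos /asboolP //|/asboolP /nneg]. Qed.

End SoundPairs.

Section SeqExtrema.
Variables (d : Order.disp_t) (T : orderType d) (x0 : T).

Lemma seqmax_mem s : s != [::] -> seqmax x0 s \in s.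
Proof.
move=> s_nil; rewrite /seqmax big_seq; apply: (big_ind (fun y => y \in s)) => //.
  by case: s s_nil => //= a s _; rewrite mem_head.
by move=> x y xs ys; rewrite /Order.max; case: ifP.
Qed.

Lemma seqmin_mem s : s != [::] -> seqmin x0 s \in s.
Proof.
move=> s_nil; rewrite /seqmin big_seq; apply: (big_ind (fun y => y \in s)) => //.
  by case: s s_nil => //= a s _; rewrite mem_head.
by move=> x y xs ys; rewrite /Order.min; case: ifP.
Qed.

Lemma seqmax_ub s x : x \in s -> (x <= seqmax x0 s)%O.
Proof.
rewrite /seqmax; elim: s (head x0 s) => [//|a s IH] idx.
by rewrite inE big_cons le_max => /orP[/eqP->|/IH->]; rewrite ?lexx ?orbT.
Qed.

Lemma seqmin_lb s x : x \in s -> (seqmin x0 s <= x)%O.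
Proof.
rewrite /seqmin; elim: s (head x0 s) => [//|a s IH] idx.
by rewrite inE big_cons ge_min => /orP[/eqP->|/IH->]; rewrite ?lexx ?orbT.
Qed.

End SeqExtrema.

Section KthLargest.
Variable R : realType.
Local Open Scope ereal_scope.

Let ge_total : total (fun a b : \bar R => b <= a).
Proof. by move=> a b; rewrite orbC le_total. Qed.
Let ge_trans : transitive (fun a b : \bar R => b <= a).
Proof. by move=> a b c /= ba cb; apply: le_trans cb ba. Qed.
Let ge_refl : reflexive (fun a b : \bar R => b <= a).
Proof. by move=> a; rewrite lexx. Qed.

Lemma kth_largest_gt (a : \bar R) k s :
  a < kth_largest k.+1 s -> (k < count (fun x => (a < x)%E) s)%N.
Proof.
rewrite /kth_largest /=; set srt := sort _ s => a_lt.
have srt_sorted : sorted (fun a b => b <= a) srt by exact: sort_sorted.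
have /seq.permP cnt := permEl (perm_sort (fun a b : \bar R => b <= a) s).
rewrite -cnt -/srt.
have k_lt : (k < size srt)%N.
  by rewrite ltnNge; apply/negP => /(nth_default -oo) kth; rewrite kth ltNge leNye in a_lt.
rewrite -(cat_take_drop k.+1 srt) count_cat; apply: leq_trans (leq_addr _ _).
have /eqP -> // : count (fun x => a < x) (take k.+1 srt) == k.+1.
rewrite -{2}(@size_takel k.+1 _ srt) // -all_count; apply/(all_nthP -oo) => i.
rewrite size_takel // => i_le; rewrite nth_take //; apply: lt_le_trans a_lt _.
by apply: (sorted_leq_nth ge_trans ge_refl) => //; rewrite inE (leq_trans i_le).
Qed.

Lemma kth_largest_lt (a : \bar R) k s :
  kth_largest k.+1 s < a -> (count (fun x => (a <= x)%E) s <= k)%N.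
Proof.
rewrite /kth_largest /=; set srt := sort _ s => lt_a.
have srt_sorted : sorted (fun a b => b <= a) srt by exact: sort_sorted.
have /seq.permP cnt := permEl (perm_sort (fun a b : \bar R => b <= a) s).
rewrite -cnt -/srt.
have [size_le|k_lt] := leqP (size srt) k; first exact: leq_trans (count_size _ _) size_le.
rewrite -(cat_take_drop k srt) count_cat.
have /eqP -> : count (fun x => a <= x) (drop k srt) == 0%N.
  rewrite -leqn0 leqNgt -has_count; apply/(has_nthP -oo) => -[i].
  rewrite size_drop nth_drop ltn_subRL => i_lt; apply/negP; rewrite -ltNge.
  apply: le_lt_trans lt_a.
  by apply: (sorted_leq_nth ge_trans ge_refl) => //; rewrite ?inE ?leq_addr // (ltn_trans k_lt).
by rewrite addn0 (leq_trans (count_size _ _)) // size_take_min geq_minl.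
Qed.

End KthLargest.

Section Counting.
Variables (R : realType) (T : eqType) (b : pred T) (r : T -> \bar R).
Hypothesis r_sound : forall x, sound_at (r x) (b x).
Local Notation indicators s := [seq (if b x then 1 else 0 : R) | x <- s].

Lemma indicator_gt (c : R) : 0 <= c < 1 ->
  forall bb : bool, (c < (if bb then 1 else 0)) = bb.
Proof. by case/andP=> c_ge0 c_lt1 []; rewrite ?c_lt1 // ltNge c_ge0. Qed.

Lemma sum_indicators s : \sum_(v <- indicators s) v = (count b s)%:R.
Proof.
elim: s => [|x s IH]; first by rewrite big_nil.
by rewrite big_cons IH /= natrD; case: (b x); rewrite ?add0r.
Qed.

Let map_nil (U : eqType) (f : T -> U) s : s != [::] -> map f s != [::].
Proof. by rewrite -!size_eq0 size_map. Qed.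

Lemma sound_count_max (c : R) s : s != [::] -> 0 <= c < 1 ->
  sound_at (seqmax -oo%E (map r s)) (c < seqmax 0 (indicators s)).
Proof.
move=> s_nil c_bnd; have ind := indicator_gt c_bnd.
split => [max_gt0|c_lt].
  have /mapP[x xs rx] := seqmax_mem -oo%E (map_nil r s_nil).
  rewrite rx in max_gt0; apply: lt_le_trans (seqmax_ub 0 (map_f _ xs)).
  by rewrite ind (proj1 (r_sound x)).
have /mapP[x xs ix] := seqmax_mem 0 (map_nil (fun x => if b x then 1 else 0 : R) s_nil).
rewrite ix ind in c_lt.
exact: le_trans (proj2 (r_sound x) c_lt) (seqmax_ub -oo%E (map_f r xs)).
Qed.

Lemma sound_count_min (c : R) s : s != [::] -> 0 <= c < 1 ->
  sound_at (seqmin +oo%E (map r s)) (c < seqmin 0 (indicators s)).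
Proof.
move=> s_nil c_bnd; have ind := indicator_gt c_bnd.
split => [min_gt0|c_lt].
  have /mapP[x xs ix] := seqmin_mem 0 (map_nil (fun x => if b x then 1 else 0 : R) s_nil).
  rewrite ix ind; apply: (proj1 (r_sound x)).
  exact: lt_le_trans min_gt0 (seqmin_lb +oo%E (map_f r xs)).
have /mapP[x xs rx] := seqmin_mem +oo%E (map_nil r s_nil).
rewrite rx; apply: (proj2 (r_sound x)); rewrite -(ind (b x)).
exact: lt_le_trans c_lt (seqmin_lb 0 (map_f (fun x => if b x then 1 else 0 : R) xs)).
Qed.

Lemma sound_count_kth k s : sound_at (kth_largest k.+1 (map r s)) (k < count b s)%N.
Proof.
split=> [/kth_largest_gt|k_lt].
  rewrite count_map => /leq_trans; apply; apply: sub_count => x /=.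
  exact: (proj1 (r_sound x)).
rewrite leNgt; apply/negP => /kth_largest_lt; rewrite count_map leqNgt.
apply/negP/negPn; apply: leq_trans k_lt _; apply: sub_count => x /=.
exact: (proj2 (r_sound x)).
Qed.

Lemma sound_count_sum (c : R) s : 0 <= c ->
  sound_at (kth_largest (Num.truncn c).+1 (map r s)) (c < \sum_(v <- indicators s) v).
Proof. by move=> c_ge0; rewrite sum_indicators -truncn_lt_nat //; exact: sound_count_kth. Qed.

Lemma sound_count_avg (c : R) s : s != [::] -> 0 <= c ->
  sound_at (kth_largest (Num.truncn (c * (size s)%:R)).+1 (map r s))
    (c < (\sum_(v <- indicators s) v) / (size (indicators s))%:R).
Proof.
move=> s_nil c_ge0; have size_gt0 : 0 < (size s)%:R :> R by rewrite ltr0n lt0n size_eq0.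
rewrite size_map sum_indicators ltr_pdivlMr // -truncn_lt_nat ?mulr_ge0 ?ler0n //.
exact: sound_count_kth.
Qed.

End Counting.

Section Soundness.
Variables (R : realType) (L : finType) (E : rel L) (eta : L -> L -> R).
Variables (P : Type) (lab : L -> P -> bool) (n : nat) (omega : R -> L -> 'I_n -> R).

Lemma rob_sound (phi : sform R P n) : wf E eta lab phi ->
  forall t l, sound_at (rob E eta lab omega phi t l) (sat E eta lab omega phi t l).
Proof.
elim: phi => [x c|f IH|f IHf g IHg|f IHf g IHg|J f IHf g IHg|op D x c|op D f IH c] /=.
- by move=> _ t l; exact: sound_at_diff.
- by move=> /IH f_snd t l; exact: sound_at_neg.
- by move=> [/IHf f_snd /IHg g_snd] t l; exact: sound_at_min.
- by move=> [/IHf f_snd /IHg g_snd] t l; exact: sound_at_max.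
- move=> [_ [_ [/IHf f_snd /IHg g_snd]]] t l.
  apply: sound_at_sup => t'; apply: sound_at_min => //; exact: sound_at_inf.
- move=> _ t l.
  by case: op => /=; first [exact: sound_at_diff | exact: sound_at_scaled_diff].
- move=> [[_ [_ locs_nil]] [/IH f_snd c_bnd]] t l.
  have b_snd l' := sound_at_asbool (f_snd t l').
  case: op c_bnd => /= c_bnd.
  + exact: sound_count_max b_snd _ _ (locs_nil l) c_bnd.
  + exact: sound_count_min b_snd _ _ (locs_nil l) c_bnd.
  + exact: sound_count_sum b_snd _ _ (proj1 c_bnd).
  + by apply: sound_count_avg b_snd _ _ (locs_nil l) _; case/andP: c_bnd.
Qed.

End Soundness.

Theorem theorem1 (R : realType) (L : finType) (E : rel L) (eta : L -> L -> R)
  (P : Type) (lab : L -> P -> bool) (n : nat)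
  (hE_sym : symmetric E)
  (heta_sym : forall a b, eta a b = eta b a)
  (heta_ge0 : forall a b, E a b -> 0 <= eta a b)
  (phi : sform R P n) (omega : R -> L -> 'I_n -> R) (t : R) (l : L) :
  wf E eta lab phi -> 0 <= t ->
  ((0 < rob E eta lab omega phi t l)%E -> sat E eta lab omega phi t l) /\
  ((rob E eta lab omega phi t l < 0)%E -> ~ sat E eta lab omega phi t l).
Proof.
move=> phi_wf _; have [pos nneg] := rob_sound omega phi_wf t l.
by split=> // rob_lt0 /nneg; rewrite leNgt rob_lt0.
Qed.
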